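(* Let $b,c_1,c_2$ be positive integers, let $\alpha/\beta$ be the right lobster $\mathcal{L}^{c_1,c_2}_b$, and let $T$ be a minimal element of $\mathrm{SET}(\alpha/\beta)$. Then for every column of $\alpha/\beta$, the set of entries of $T$ in the cells of that column is an interval of consecutive integers.
   Context: Rows are numbered from the bottom. The right lobster $\mathcal{L}^{c_1,c_2}_b$ is the skew diagram $\alpha/\beta$ with $\alpha=(b+1+c_2,b+1,b+1+c_1)$, $\beta=(b+1,1,b+1)$: a bottom row of $c_2$ cells in columns $b+2,\ldots,b+1+c_2$, a middle row of $b$ cells in columns $2,\ldots,b+1$, and a top row of $c_1$ cells in columns $b+2,\ldots,b+1+c_1$. $\mathrm{SET}(\alpha/\beta)$ is the set of bijective fillings with $1,\ldots,N$ ($N=b+c_1+c_2$) whose rows increase left to right and columns increase bottom to top. For $1\le i\le N-1$, $\pi_i(T)=T$ if $i+1$ is in a strictly higher row than $i$, $\pi_i(T)=s_i(T)$ (swap $i$ and $i+1$) if $i+1$ is in a strictly lower row than $i$, and $\pi_i(T)=0$ otherwise; the poset order is $T\le T'$ iff $T'$ is obtained from $T$ by a sequence of operators $\pi_i$ (all intermediate results nonzero); minimal elements are those with no strictly smaller element. *)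

From mathcomp Require Import all_boot.
Set Implicit Arguments. Unset Strict Implicit. Unset Printing Implicit Defensive.

(* Cells are pairs (row, column), rows 1..3 numbered from the bottom,
   columns 1-based as in the paper.  The ambient grid is 'I_4 * 'I_(gridW b c1 c2),
   large enough to contain every cell of the lobster. *)
Definition gridW (b c1 c2 : nat) : nat := b + c1 + c2 + 2.
Definition cell (b c1 c2 : nat) : finType := ('I_4 * 'I_(gridW b c1 c2))%type.

(* membership of (r, c) in the right lobster L^{c1,c2}_b = alpha/beta,
   alpha = (b+1+c2, b+1, b+1+c1), beta = (b+1, 1, b+1) *)
Definition in_lobster (b c1 c2 r c : nat) : bool :=
  [|| (r == 1) && (b + 2 <= c <= b + 1 + c2),
      (r == 2) && (2 <= c <= b + 1)
    | (r == 3) && (b + 2 <= c <= b + 1 + c1)].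

Definition inL b c1 c2 (x : cell b c1 c2) : bool := in_lobster b c1 c2 x.1 x.2.

(* A filling is a finite function on the grid; cells outside alpha/beta carry 0. *)
Definition filling b c1 c2 := {ffun cell b c1 c2 -> nat}.

Definition sizeN (b c1 c2 : nat) : nat := b + c1 + c2.

Definition is_SET b c1 c2 (T : filling b c1 c2) : Prop :=
  (forall x, ~~ inL x -> T x = 0) /\
  [/\ (forall x, inL x -> 1 <= T x <= sizeN b c1 c2),
      (forall x y, inL x -> inL y -> T x = T y -> x = y),
      (forall k, 1 <= k <= sizeN b c1 c2 -> exists x, inL x && (T x == k)),
      (forall x y, inL x -> inL y -> x.1 = y.1 -> (x.2 < y.2)%N -> T x < T y)
    & (forall x y, inL x -> inL y -> x.2 = y.2 -> (x.1 < y.1)%N -> T x < T y)].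

(* row of the cell containing the entry k (0 if there is none) *)
Definition rowof b c1 c2 (T : filling b c1 c2) (k : nat) : nat :=
  if [pick x | inL x && (T x == k)] is Some x then nat_of_ord x.1 else 0.

Definition swapT b c1 c2 (i : nat) (T : filling b c1 c2) : filling b c1 c2 :=
  [ffun x => if T x == i then i.+1 else if T x == i.+1 then i else T x].

(* pi_i T; None stands for 0 *)
Definition pi_op b c1 c2 (i : nat) (T : filling b c1 c2) : option (filling b c1 c2) :=
  if rowof T i < rowof T i.+1 then Some T
  else if rowof T i.+1 < rowof T i then Some (swapT i T)
  else None.

Definition pi_step b c1 c2 (T T' : filling b c1 c2) : Prop :=
  exists2 i, 1 <= i <= (sizeN b c1 c2).-1 & pi_op i T = Some T'.

Inductive set_le b c1 c2 : filling b c1 c2 -> filling b c1 c2 -> Prop :=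
  | set_le_refl T : set_le T T
  | set_le_step T T' T'' : pi_step T T' -> set_le T' T'' -> set_le T T''.

Definition is_minimal_SET b c1 c2 (T : filling b c1 c2) : Prop :=
  is_SET T /\ forall T', is_SET T' -> set_le T' T -> T' = T.

From mathcomp Require Import all_boot zify.

Set Implicit Arguments.
Unset Strict Implicit.
Unset Printing Implicit Defensive.

(* Only the columns b+2, b+3, ... of the lobster have two cells, one in the
   bottom row and one in the top row, and it suffices to show that their
   entries a < d satisfy d = a + 1.  Otherwise some i in [a, d) sits in a
   strictly lower row than i + 1.  If i and i + 1 lie in different columns,
   exchanging them gives a standard filling T' with pi_i T' = T, contradicting
   minimality.  If they lie in the same column, that column is strictly left
   of, equal to, or strictly right of the column of a and d; the first and
   last cases contradict the row increase, the middle one forces i = a and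
   i + 1 = d. *)

Definition swapn (i v : nat) : nat :=
  if v == i then i.+1 else if v == i.+1 then i else v.

Lemma swapnK i : involutive (swapn i).
Proof.
move=> v; rewrite /swapn.
case: (v =P i) => [->|ne_i]; first by rewrite eqn_leq ltnn /= eqxx.
case: (v =P i.+1) => [->|ne_Si]; first by rewrite eqxx.
by rewrite (introF eqP ne_i) (introF eqP ne_Si).
Qed.

Lemma swapn_inj i : injective (swapn i).
Proof. exact: inv_inj (swapnK i). Qed.

Lemma swapn_lt i u v : u < v -> ~ (u = i /\ v = i.+1) -> swapn i u < swapn i v.
Proof. by move=> ltuv not_iSi; rewrite /swapn; do ![case: eqP => ?]; lia. Qed.

Lemma swapn_ge1 i v n : 1 <= i -> i < n -> 1 <= v <= n -> 1 <= swapn i v <= n.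
Proof. by move=> *; rewrite /swapn; do ![case: eqP => ?]; lia. Qed.

Lemma swapn0 i : 0 < i -> swapn i 0 = 0.
Proof. by move=> i_gt0; rewrite /swapn; do ![case: eqP => ?]; lia. Qed.

Lemma exists_ascent (f : nat -> nat) a d :
  a <= d -> f a < f d -> exists2 i, a <= i < d & f i < f i.+1.
Proof.
elim: d => [|d IHd] le_ad lt_ad.
  by move: le_ad lt_ad; rewrite leqn0 => /eqP ->; rewrite ltnn.
have le_ad' : a <= d.
  by move: le_ad lt_ad; rewrite leq_eqVlt => /predU1P [->|]; rewrite ?ltnn.
case: (ltnP (f d) (f d.+1)) => [asc_d|ge_d]; first by exists d; rewrite ?le_ad' ?ltnSn.
have [i /andP [le_ai lt_id] asc_i] := IHd le_ad' (leq_trans lt_ad ge_d).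
by exists i; rewrite // le_ai ltnS ltnW.
Qed.

Section Lobster.

Variables b c1 c2 : nat.
Implicit Types (T : filling b c1 c2) (x y p q : cell b c1 c2).

Lemma cell_val_inj x y : x.1 = y.1 :> nat -> x.2 = y.2 :> nat -> x = y.
Proof. by case: x y => [? ?] [? ?] /= /val_inj -> /val_inj ->. Qed.

Lemma inL_column x y :
  inL x -> inL y -> x.2 = y.2 -> x.1 < y.1 -> x.1 = 1 :> nat /\ y.1 = 3 :> nat.
Proof.
rewrite /inL /in_lobster => Lx Ly /(congr1 (@nat_of_ord _)) col_xy lt_xy.
by case/or3P: Lx => /andP [/eqP rx /andP [? ?]];
   case/or3P: Ly => /andP [/eqP ry /andP [? ?]]; lia.
Qed.

Lemma swapTE i T x : swapT i T x = swapn i (T x).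
Proof. by rewrite ffunE. Qed.

Lemma swapTK i : involutive (@swapT b c1 c2 i).
Proof. by move=> T; apply/ffunP => x; rewrite !swapTE swapnK. Qed.

Section StandardFilling.

Variable T : filling b c1 c2.
Hypothesis T_SET : is_SET T.

Let N := sizeN b c1 c2.

Lemma SET_out x : ~~ inL x -> T x = 0.
Proof. by case: T_SET => out _; apply: out. Qed.

Lemma SET_range x : inL x -> 1 <= T x <= N.
Proof. by case: T_SET => _ [range _ _ _ _]; apply: range. Qed.

Lemma SET_inj x y : inL x -> inL y -> T x = T y -> x = y.
Proof. by case: T_SET => _ [_ inj _ _ _]; apply: inj. Qed.

Lemma SET_surj k : 1 <= k <= N -> exists2 x, inL x & T x = k.
Proof.
case: T_SET => _ [_ _ surj _ _] /surj [x /andP [Lx /eqP <-]].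
by exists x.
Qed.

Lemma SET_row x y : inL x -> inL y -> x.1 = y.1 -> x.2 < y.2 -> T x < T y.
Proof. by case: T_SET => _ [_ _ _ row _]; apply: row. Qed.

Lemma SET_col x y : inL x -> inL y -> x.2 = y.2 -> x.1 < y.1 -> T x < T y.
Proof. by case: T_SET => _ [_ _ _ _ col]; apply: col. Qed.

Lemma rowof_entry x : inL x -> rowof T (T x) = x.1.
Proof.
move=> Lx; rewrite /rowof; case: pickP => [z /andP [Lz /eqP Tzx]|none].
  by rewrite (SET_inj Lz Lx Tzx).
by move: (none x); rewrite Lx eqxx.
Qed.

Variables (i : nat) (p q : cell b c1 c2).
Hypotheses (Lp : inL p) (Lq : inL q) (Tp : T p = i) (Tq : T q = i.+1).

Lemma swapT_SET : p.1 <> q.1 -> p.2 <> q.2 -> is_SET (swapT i T).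
Proof.
move=> row_pq col_pq.
have i_gt0 : 0 < i by rewrite -Tp; case/andP: (SET_range Lp).
have lt_iN : i < N by rewrite -ltnS -Tq; case/andP: (SET_range Lq).
have swap_lt x y : inL x -> inL y -> T x < T y -> x.1 = y.1 \/ x.2 = y.2 ->
    swapT i T x < swapT i T y.
  move=> Lx Ly lt_xy line_xy; rewrite !swapTE; apply: swapn_lt => // [[Tx Ty]].
  have xp : x = p by apply: SET_inj; rewrite ?Tx.
  have yq : y = q by apply: SET_inj; rewrite ?Ty.
  by rewrite xp yq in line_xy; case: line_xy.
split; first by move=> x /SET_out Tx; rewrite swapTE Tx swapn0.
split=> [x Lx | x y Lx Ly | k /(swapn_ge1 i_gt0 lt_iN) rk | x y Lx Ly eq_r lt_c
        | x y Lx Ly eq_c lt_r].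
- by rewrite swapTE swapn_ge1 ?SET_range.
- by rewrite !swapTE => /swapn_inj; apply: SET_inj.
- have [x Lx Tx] := SET_surj rk.
  by exists x; rewrite Lx swapTE Tx swapnK eqxx.
- by apply: swap_lt; [| | apply: SET_row | left].
- by apply: swap_lt; [| | apply: SET_col | right].
Qed.

End StandardFilling.

Lemma pi_op_descent T i p q : is_SET T -> inL p -> inL q ->
  T p = i -> T q = i.+1 -> q.1 < p.1 -> pi_op i T = Some (swapT i T).
Proof.
move=> T_SET Lp Lq Tp Tq lt_qp.
have rowi : rowof T i = p.1 by rewrite -Tp rowof_entry.
have rowSi : rowof T i.+1 = q.1 by rewrite -Tq rowof_entry.
by rewrite /pi_op rowi rowSi ltnNge ltnW //= lt_qp.
Qed.

Lemma minimal_ascent_column T i p q : is_minimal_SET T -> inL p -> inL q ->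
  T p = i -> T q = i.+1 -> p.1 < q.1 -> p.2 = q.2.
Proof.
move=> [T_SET T_min] Lp Lq Tp Tq lt_pq; case: (p.2 =P q.2) => // col_pq; exfalso.
have row_pq : p.1 <> q.1 by move=> eq_pq; rewrite eq_pq ltnn in lt_pq.
set S := swapT i T.
have S_SET : is_SET S := swapT_SET T_SET Lp Lq Tp Tq row_pq col_pq.
have Sp : S p = i.+1 by rewrite swapTE Tp /swapn eqxx.
have Sq : S q = i by rewrite swapTE Tq /swapn eqxx; case: eqP => // /esym/n_Sn.
have i_range : 1 <= i <= (sizeN b c1 c2).-1.
  by have := SET_range T_SET Lp; have := SET_range T_SET Lq; rewrite Tp Tq; lia.
have S_le_T : set_le S T.
  apply: set_le_step (set_le_refl T); exists i => //.
  by rewrite (pi_op_descent S_SET Lq Lp Sq Sp lt_pq) swapTK.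
by move: Sp; rewrite (T_min S S_SET S_le_T) Tp => /n_Sn.
Qed.

Lemma minimal_column_succ T x y : is_minimal_SET T -> inL x -> inL y ->
  x.2 = y.2 -> x.1 < y.1 -> T y = (T x).+1.
Proof.
move=> T_min Lx Ly col_xy lt_xy; have T_SET := T_min.1.
have [rx ry] := inL_column Lx Ly col_xy lt_xy.
have lt_Txy := SET_col T_SET Lx Ly col_xy lt_xy.
apply/eqP; rewrite eqn_leq lt_Txy andbT leqNgt; apply/negP => gap.
have [i /andP [le_xi lt_iy] asc_i] :
    exists2 i, T x <= i < T y & rowof T i < rowof T i.+1.
  by apply: exists_ascent; [exact: ltnW | rewrite !(rowof_entry T_SET) // rx ry].
have [rgx rgy] := (SET_range T_SET Lx, SET_range T_SET Ly).
have [p Lp Tp] : exists2 p, inL p & T p = i by apply: (SET_surj T_SET); lia.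
have [q Lq Tq] : exists2 q, inL q & T q = i.+1 by apply: (SET_surj T_SET); lia.
have lt_pq : p.1 < q.1.
  by rewrite -(rowof_entry T_SET Lp) -(rowof_entry T_SET Lq) Tp Tq.
have col_pq := minimal_ascent_column T_min Lp Lq Tp Tq lt_pq.
have [rp rq] := inL_column Lp Lq col_pq lt_pq.
case: (ltngtP p.2 x.2) => [lt_px | lt_xp | eq_px].
- have := SET_row T_SET Lp Lx (ord_inj (etrans rp (esym rx))) lt_px.
  by rewrite Tp ltnNge le_xi.
- rewrite col_xy col_pq in lt_xp.
  have := SET_row T_SET Ly Lq (ord_inj (etrans ry (esym rq))) lt_xp.
  by rewrite Tq ltnS leqNgt lt_iy.
- have xp : p = x by apply: cell_val_inj; rewrite ?rp ?rx.
  have yq : q = y by apply: cell_val_inj; rewrite ?rq ?ry // -col_pq eq_px col_xy.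
  by move: gap; rewrite -yq -xp Tq Tp ltnn.
Qed.

End Lobster.

Theorem lemma5p5 (b c1 c2 : nat) (T : filling b c1 c2) :
  0 < b -> 0 < c1 -> 0 < c2 ->
  is_minimal_SET T ->
  forall x y : cell b c1 c2, inL x -> inL y -> x.2 = y.2 ->
  forall m, T x <= m <= T y ->
  exists z : cell b c1 c2, [/\ inL z, z.2 = x.2 & T z = m].
Proof.
move=> _ _ _ T_min x y Lx Ly col_xy m /andP [le_xm le_my].
have T_SET := T_min.1.
case: (ltngtP x.1 y.1) => [lt_xy | lt_yx | eq_xy].
- have Ty := minimal_column_succ T_min Lx Ly col_xy lt_xy.
  case: (leqP m (T x)) => [le_mx | lt_xm].
    by exists x; split=> //; apply/eqP; rewrite eqn_leq le_mx le_xm.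
  by exists y; split=> //; apply/eqP; rewrite eqn_leq le_my Ty lt_xm.
- have := SET_col T_SET Ly Lx (esym col_xy) lt_yx.
  by rewrite ltnNge (leq_trans le_xm le_my).
- have yx : y = x by apply: cell_val_inj; rewrite ?eq_xy ?col_xy.
  by exists x; split=> //; apply/eqP; rewrite eqn_leq le_xm -yx le_my.
Qed.
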